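(* If an $R$-module $M$ is prime and uniform, then $M$ is strongly prime.
   Context: $R$ is a commutative Noetherian local ring. A module $M\neq0$ is prime if every $r\in R$ acts on $M$ either as zero or injectively. A module is uniform if it is nonzero and any two nonzero submodules intersect nontrivially. A module $M\ne0$ is strongly prime if every nonzero $R$-endomorphism $f:M\to M$ is injective. *)

From HB Require Import structures.
From mathcomp Require Import all_boot all_order all_algebra.
Set Implicit Arguments. Unset Strict Implicit. Unset Printing Implicit Defensive.
Import GRing.Theory.
Local Open Scope ring_scope.

Definition is_ideal (R : comNzRingType) (I : R -> Prop) : Prop :=
  [/\ I 0, (forall x y, I x -> I y -> I (x + y)) & (forall r x, I x -> I (r * x))].

Definition noetherian_ring (R : comNzRingType) : Prop :=
  forall I : nat -> R -> Prop,
    (forall n, is_ideal (I n)) ->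
    (forall n x, I n x -> I n.+1 x) ->
    exists N, forall m, (N <= m)%N -> forall x, I m x <-> I N x.

Definition maximal_ideal (R : comNzRingType) (I : R -> Prop) : Prop :=
  [/\ is_ideal I, ~ I 1 &
      forall J : R -> Prop, is_ideal J -> (forall x, I x -> J x) ->
        (forall x, J x <-> I x) \/ J 1].

Definition local_ring (R : comNzRingType) : Prop :=
  exists I : R -> Prop, maximal_ideal I /\
    forall J : R -> Prop, maximal_ideal J -> forall x, J x <-> I x.

Definition is_submodule (R : comNzRingType) (M : lmodType R) (N : M -> Prop) : Prop :=
  [/\ N 0, (forall x y, N x -> N y -> N (x + y)) & (forall (r : R) x, N x -> N (r *: x))].

Definition nonzero_module (R : comNzRingType) (M : lmodType R) : Prop :=
  exists m : M, m <> 0.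

Definition prime_module (R : comNzRingType) (M : lmodType R) : Prop :=
  nonzero_module M /\
  forall r : R, (forall m : M, r *: m = 0) \/ injective (fun m : M => r *: m).

Definition uniform_module (R : comNzRingType) (M : lmodType R) : Prop :=
  nonzero_module M /\
  forall N1 N2 : M -> Prop, is_submodule N1 -> is_submodule N2 ->
    (exists x, N1 x /\ x <> 0) -> (exists x, N2 x /\ x <> 0) ->
    exists x, [/\ N1 x, N2 x & x <> 0].

Definition strongly_prime_module (R : comNzRingType) (M : lmodType R) : Prop :=
  nonzero_module M /\
  forall f : {linear M -> M}, (exists m, f m <> 0) -> injective f.

From mathcomp Require Import all_boot all_order all_algebra.
Import GRing.Theory.
Local Open Scope ring_scope.

(* Let f be an endomorphism of M with a nonzero kernel element z, and let m be
   any element with m <> 0.  Uniformity applied to the cyclic submodules R z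
   and R m yields scalars a, b with a z = b m <> 0.  Then
   b (f m) = f (b m) = f (a z) = a (f z) = 0, while b does not annihilate M
   (since b m <> 0); primeness makes b act injectively, so f m = 0.  Hence an
   endomorphism with nontrivial kernel is zero, i.e. every nonzero
   endomorphism is injective. *)

Section PrimeUniform.

Context {R : comNzRingType} {M : lmodType R}.

Definition cyclic_submodule (z : M) : M -> Prop :=
  fun x => exists r : R, x = r *: z.

Lemma cyclic_submoduleP (z : M) : is_submodule (cyclic_submodule z).
Proof.
split.
- by exists 0; rewrite scale0r.
- by move=> x y [a ->] [b ->]; exists (a + b); rewrite scalerDl.
- by move=> r x [a ->]; exists (r * a); rewrite scalerA.
Qed.

Lemma cyclic_submodule_nonzero {z : M} :
  z <> 0 -> exists x, cyclic_submodule z x /\ x <> 0.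
Proof. by move=> z0; exists z; split=> //; exists 1; rewrite scale1r. Qed.

Lemma uniform_common_multiple {z m : M} :
  uniform_module M -> z <> 0 -> m <> 0 ->
  exists a b : R, a *: z = b *: m /\ b *: m <> 0.
Proof.
move=> [_ unifM] z0 m0.
have [w [[a wa] [b wb] w0]] := unifM _ _ (cyclic_submoduleP z)
  (cyclic_submoduleP m) (cyclic_submodule_nonzero z0)
  (cyclic_submodule_nonzero m0).
by exists a, b; rewrite -wa -wb.
Qed.

Lemma prime_scalar_cancel {b : R} {m v : M} :
  prime_module M -> b *: m <> 0 -> b *: v = 0 -> v = 0.
Proof.
move=> [_ primeM] bm0 bv0; case: (primeM b) => [bM0 | b_inj].
- by have := bM0 m.
- by apply: b_inj; rewrite /= bv0 scaler0.
Qed.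

Lemma kernel_nonzero_endo_zero {f : {linear M -> M}} {z : M} :
  prime_module M -> uniform_module M -> z <> 0 -> f z = 0 ->
  forall m, f m = 0.
Proof.
move=> primeM unifM z0 fz0 m.
have [-> | /eqP m0] := eqVneq m 0; first exact: linear0.
have [a [b [azbm bm0]]] := uniform_common_multiple unifM z0 m0.
apply: (prime_scalar_cancel primeM bm0).
by rewrite -linearZ /= -azbm linearZ /= fz0 scaler0.
Qed.

End PrimeUniform.

Lemma linear_injective_kernel (R : comNzRingType) (M N : lmodType R)
    (f : {linear M -> N}) :
  (forall z, f z = 0 -> z = 0) -> injective f.
Proof.
move=> ker0 x y fxy; apply/eqP; rewrite -subr_eq0; apply/eqP.
by apply: ker0; rewrite linearB fxy subrr.
Qed.

Theorem lemma2p1 (R : comNzRingType) (M : lmodType R) :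
  noetherian_ring R -> local_ring R ->
  prime_module M -> uniform_module M -> strongly_prime_module M.
Proof.
move=> _ _ primeM unifM; split; first by case: primeM.
move=> f [m fm0]; apply: linear_injective_kernel => z fz0.
have [-> // | /eqP z0] := eqVneq z 0.
by case: fm0; apply: (kernel_nonzero_endo_zero primeM unifM z0 fz0).
Qed.
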